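(* Let $K$ be a field, $n\ge2$, and consider $K^n$ as a left module over the matrix algebra $M_n(K)$ via matrix–vector multiplication. Let $N$ be a $K$-subspace of $K^n$. Then: (i) if $N=K^n$, then $\sigma_\vartheta(N)=\tau_\vartheta(N)=K^n$ for all $\vartheta$; (ii) if $N=0$, then $\sigma_\vartheta(N)=\tau_\vartheta(N)=K^n$ when $\vartheta$ = left, and $\sigma_\vartheta(N)=\tau_\vartheta(N)=0$ when $\vartheta$ is right, pre-two-sided or two-sided; (iii) if $N$ is nonzero and proper, then $\sigma_\vartheta(N)=\tau_\vartheta(N)=0$ for all $\vartheta$.
   Context: For an associative unital algebra $\mathcal A$ over a field $K$, the symbol $\vartheta$ ranges over ''left'', ''right'', ''pre-two-sided'', ''two-sided''. A subspace $J\subseteq\mathcal A$ is a left (resp. right; two-sided) Mathieu subspace of $\mathcal A$ if whenever $a\in\mathcal A$ satisfies $a^m\in J$ for all $m\ge1$, then for all $b,c\in\mathcal A$ there is $N_0$ with $ba^m\in J$ (resp. $a^mc\in J$; $ba^mc\in J$) for all $m\ge N_0$; pre-two-sided means both left and right. A $\vartheta$-ideal means a left/right/two-sided ideal accordingly, and a two-sided ideal for $\vartheta$ = pre-two-sided. For a left $\mathcal A$-module $\mathcal M$, $u\in\mathcal M$, $N\subseteq \mathcal M$, $(N:u)=\{a\in\mathcal A: au\in N\}$; for a subspace $N$, $\sigma_\vartheta(N)=\{u\in\mathcal M: (N:u)\text{ is a }\vartheta\text{-ideal of }\mathcal A\}$, $\tau_\vartheta(N)=\{u\in\mathcal M: (N:u)\text{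 is a }\vartheta\text{-Mathieu subspace of }\mathcal A\}$. *)

From HB Require Import structures.
From mathcomp Require Import all_boot all_order all_algebra.
Set Implicit Arguments. Unset Strict Implicit. Unset Printing Implicit Defensive.
Import GRing.Theory.
Local Open Scope ring_scope.

Inductive theta := Left | Right | PreTwo | Two.

Section MatrixMathieu.
Variables (K : fieldType) (n : nat).
Notation A := 'M[K]_n.

Definition Ksubspace (J : A -> Prop) : Prop :=
  [/\ J 0, (forall a b, J a -> J b -> J (a + b)) & (forall (c : K) a, J a -> J (c *: a))].

Definition left_ideal (J : A -> Prop) : Prop :=
  Ksubspace J /\ forall b a, J a -> J (b * a).
Definition right_ideal (J : A -> Prop) : Prop :=
  Ksubspace J /\ forall a c, J a -> J (a * c).
Definition twosided_ideal (J : A -> Prop) : Prop :=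
  left_ideal J /\ right_ideal J.

Definition is_theta_ideal (th : theta) (J : A -> Prop) : Prop :=
  match th with
  | Left => left_ideal J
  | Right => right_ideal J
  | PreTwo | Two => twosided_ideal J
  end.

Definition powers_in (J : A -> Prop) (a : A) : Prop :=
  forall m : nat, (1 <= m)%N -> J (a ^+ m).

Definition left_Mathieu (J : A -> Prop) : Prop :=
  Ksubspace J /\ forall a, powers_in J a ->
    forall b, exists N0 : nat, forall m, (N0 <= m)%N -> J (b * a ^+ m).
Definition right_Mathieu (J : A -> Prop) : Prop :=
  Ksubspace J /\ forall a, powers_in J a ->
    forall c, exists N0 : nat, forall m, (N0 <= m)%N -> J (a ^+ m * c).
Definition twosided_Mathieu (J : A -> Prop) : Prop :=
  Ksubspace J /\ forall a, powers_in J a ->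
    forall b c, exists N0 : nat, forall m, (N0 <= m)%N -> J (b * a ^+ m * c).

Definition is_theta_Mathieu (th : theta) (J : A -> Prop) : Prop :=
  match th with
  | Left => left_Mathieu J
  | Right => right_Mathieu J
  | PreTwo => left_Mathieu J /\ right_Mathieu J
  | Two => twosided_Mathieu J
  end.

(* K^n as a left M_n(K)-module: column vectors, action a *m u. *)
Definition colon (N : {vspace 'cV[K]_n}) (u : 'cV[K]_n) : A -> Prop :=
  fun a => (a *m u) \in N.

Definition sigma (th : theta) (N : {vspace 'cV[K]_n}) (u : 'cV[K]_n) : Prop :=
  is_theta_ideal th (colon N u).
Definition tau (th : theta) (N : {vspace 'cV[K]_n}) (u : 'cV[K]_n) : Prop :=
  is_theta_Mathieu th (colon N u).

End MatrixMathieu.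

(* (N : u) is always a K-subspace, and it is everything when N = K^n or u = 0.
   Otherwise the Mathieu conditions are broken by idempotents: all powers of an
   idempotent e equal e, so if e lies in (N : u), a left (resp. right) Mathieu
   condition forces b e (resp. e c) into (N : u) for every b (resp. c).  For
   u <> 0 and N <> K^n, rank-one idempotents e = x r, with a row vector r taking
   prescribed values on two linearly independent vectors, provide such an e
   with b e u or e c u outside N.  The right-hand construction needs n >= 2, the
   left-hand one needs N <> 0; indeed (0 : u) is a left ideal. *)

From HB Require Import structures.
From mathcomp Require Import all_boot all_order all_algebra.
From mathcomp Require Import ring.
Import GRing.Theory.
Local Open Scope ring_scope.

Section ThetaIdealsMathieu.
Context {K : fieldType} {n : nat}.
Implicit Types (J : 'M[K]_n -> Prop) (th : theta).

Lemma theta_ideal_Mathieu th J : is_theta_ideal th J -> is_theta_Mathieu th J.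
Proof.
have left_M J' : left_ideal J' -> left_Mathieu J'.
  by case=> J'sub J'M; split=> // a a_pow b; exists 1%N => m m_gt0; apply/J'M/a_pow.
have right_M J' : right_ideal J' -> right_Mathieu J'.
  by case=> J'sub J'M; split=> // a a_pow c; exists 1%N => m m_gt0; apply/J'M/a_pow.
case: th => /=; try by [apply: left_M | apply: right_M].
  by case=> /left_M JL /right_M JR.
case=> -[Jsub JL] [_ JR]; split=> // a a_pow b c.
by exists 1%N => m m_gt0; apply/JR/JL/a_pow.
Qed.

Lemma theta_Mathieu_left_or_right th J : is_theta_Mathieu th J ->
  (th = Left /\ left_Mathieu J) \/ right_Mathieu J.
Proof.
case: th => /=; [by left | by right | by case; right |].
case=> Jsub JM; right; split=> // a a_pow c.
by have [N0 JN0] := JM a a_pow 1 c; exists N0 => m /JN0; rewrite mul1r.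
Qed.

Lemma idem_expS (e : 'M[K]_n) m : e * e = e -> e ^+ m.+1 = e.
Proof. by move=> ee; elim: m => [|m IHm]; rewrite ?expr1 // exprS IHm. Qed.

Lemma idem_powers_in {J e} : e * e = e -> J e -> powers_in J e.
Proof. by move=> ee Je [|m] // _; rewrite idem_expS. Qed.

Lemma left_Mathieu_idem {J e} b : left_Mathieu J -> e * e = e -> J e -> J (b * e).
Proof.
case=> _ JM ee Je; have [N0 JN0] := JM e (idem_powers_in ee Je) b.
by have := JN0 N0.+1 (leqnSn _); rewrite idem_expS.
Qed.

Lemma right_Mathieu_idem {J e} c : right_Mathieu J -> e * e = e -> J e -> J (e * c).
Proof.
case=> _ JM ee Je; have [N0 JN0] := JM e (idem_powers_in ee Je) c.
by have := JN0 N0.+1 (leqnSn _); rewrite idem_expS.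
Qed.

End ThetaIdealsMathieu.

Section ColonSets.
Context {K : fieldType} {n : nat}.
Implicit Types (N U V : {vspace 'cV[K]_n}) (u x y : 'cV[K]_n) (th : theta).

Lemma Ksubspace_colon N u : Ksubspace (colon N u).
Proof.
split; rewrite /colon.
- by rewrite mul0mx mem0v.
- by move=> a b Na Nb; rewrite mulmxDl rpredD.
- by move=> c a Na; rewrite -scalemxAl rpredZ.
Qed.

Lemma sigma_tau_colon_full th N u : (forall a, colon N u a) ->
  sigma th N u /\ tau th N u.
Proof.
move=> colonT; have sigma_u : sigma th N u.
  have Nsub := Ksubspace_colon N u.
  by case: th; do ?split=> //; move=> *; apply: colonT.
by split; last exact: theta_ideal_Mathieu.
Qed.

Lemma sigma_tau_eq0P th N u : (u != 0 -> ~ tau th N u) ->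
  (sigma th N u <-> u = 0) /\ (tau th N u <-> u = 0).
Proof.
move=> tau_u0.
have u0_sigma_tau : u = 0 -> sigma th N u /\ tau th N u.
  by move=> ->; apply: sigma_tau_colon_full => a; rewrite /colon mulmx0 mem0v.
have tau_eq0 : tau th N u -> u = 0.
  by move=> tau_u; apply/eqP; apply: contraT => /tau_u0.
split; split=> [|/u0_sigma_tau []//]; last exact: tau_eq0.
by move/theta_ideal_Mathieu; exact: tau_eq0.
Qed.

Lemma vspace_proper_notin {U} : U != fullv -> exists y, y \notin U.
Proof.
move=> UnT; have /subvPn[y _ Uy] : ~~ (fullv <= U)%VS.
  by apply: contra UnT => TU; rewrite eqEsubv subvf.
by exists y.
Qed.

Lemma vspace_union_proper {U V} : U != fullv -> V != fullv ->
  exists y, (y \notin U) && (y \notin V).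
Proof.
move=> /vspace_proper_notin[a Ua] /vspace_proper_notin[b Vb].
have [Va|Va] := boolP (a \in V); last by exists a; rewrite Ua.
have [Ub|Ub] := boolP (b \in U); last by exists b; rewrite Ub.
exists (a + b); apply/andP; split.
  by apply: contra Ua => Uab; rewrite -(addrK b a) rpredB.
by apply: contra Vb => Vab; rewrite -(addKr a b) rpredD ?rpredN.
Qed.

Lemma dim_cV : \dim (fullv : {vspace 'cV[K]_n}) = n.
Proof. by rewrite dimvf /dim /= muln1. Qed.

Lemma vline_proper u : (1 < n)%N -> <[u]>%VS != fullv.
Proof.
move=> n_gt1; apply: contraTneq n_gt1 => uT.
by rewrite -leqNgt -dim_cV -uT dim_vline leq_b1.
Qed.

(* Cramer's rule for the 2 x 2 system [r u = a, r y = b] with r supported on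
   two coordinates [i, j] at which the minor of [u, y] does not vanish. *)
Lemma row_interpolate {u y} (a b : K) : u != 0 -> y \notin <[u]>%VS ->
  exists r : 'rV[K]_n, r *m u = a%:M /\ r *m y = b%:M.
Proof.
move=> u_neq0 y_line.
have [i ui0] : exists i, u i 0 != 0.
  apply/existsP; apply: contraR u_neq0 => /existsPn u0.
  by apply/eqP/matrixP => i j; rewrite ord1 mxE; apply/eqP/negPn/u0.
pose minor j := u i 0 * y j 0 - u j 0 * y i 0.
have [j minor0] : exists j, minor j != 0.
  apply/existsP; apply: contraR y_line => /existsPn minor0.
  apply/vlineP; exists (y i 0 / u i 0); apply/matrixP => j k; rewrite ord1 !mxE.
  have /negPn := minor0 j; rewrite /minor subr_eq0 => /eqP ij.
  by apply: (mulfI ui0); rewrite ij [RHS]mulrA [u i 0 * _]mulrC divfK // mulrC.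
exists ((minor j)^-1 *: ((a * y j 0 - b * u j 0) *: delta_mx 0 i
                         + (b * u i 0 - a * y i 0) *: delta_mx 0 j)).
rewrite -!scalemxAl !mulmxDl -!scalemxAl -!rowE.
by split; apply/matrixP => ? ?; rewrite !ord1 !mxE /= mulr1n /minor; field.
Qed.

Lemma colon_not_right_Mathieu N u : (1 < n)%N -> u != 0 -> N != fullv ->
  ~ right_Mathieu (colon N u).
Proof.
move=> n_gt1 u_neq0 NnT JR.
have [y /andP[Ny y_line]] := vspace_union_proper NnT (vline_proper u n_gt1).
have [r [ru ry]] := row_interpolate 0 1 u_neq0 y_line.
have [s [su _]] := row_interpolate 1 0 u_neq0 y_line.
have yr_idem : y *m r * (y *m r) = y *m r.
  by rewrite -mulmxE mulmxA -(mulmxA y r) ry mulmx1.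
have /(right_Mathieu_idem (y *m s) JR yr_idem) : colon N u (y *m r).
  by rewrite /colon -mulmxA ru mul_mx_scalar scale0r mem0v.
by rewrite /colon -mulmxE -!mulmxA su mulmx1 ry mulmx1 (negPf Ny).
Qed.

Lemma colon_not_left_Mathieu N u : u != 0 -> N != 0%VS -> N != fullv ->
  ~ left_Mathieu (colon N u).
Proof.
move=> u_neq0 Nn0 NnT JL.
have [y Ny] := vspace_proper_notin NnT.
have [Nu|Nu] := boolP (u \in N).
  have y_line : y \notin <[u]>%VS.
    by apply: contra Ny; apply/subvP; rewrite -memvE.
  have [s [su _]] := row_interpolate 1 0 u_neq0 y_line.
  have /(left_Mathieu_idem (y *m s) JL (mulr1 1)) : colon N u 1.
    by rewrite /colon mul1mx.
  by rewrite /colon mulr1 -mulmxA su mulmx1 (negPf Ny).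
pose x := vpick N.
have x_neq0 : x != 0 by rewrite vpick0.
have u_line : u \notin <[x]>%VS.
  by apply: contra Nu; apply/subvP; rewrite -memvE memv_pick.
have [r [rx ru]] := row_interpolate 1 1 x_neq0 u_line.
have xr_idem : x *m r * (x *m r) = x *m r.
  by rewrite -mulmxE mulmxA -(mulmxA x r) rx mulmx1.
have /(left_Mathieu_idem (y *m r) JL xr_idem) : colon N u (x *m r).
  by rewrite /colon -mulmxA ru mulmx1 memv_pick.
by rewrite /colon -mulmxE -!mulmxA ru mulmx1 rx mulmx1 (negPf Ny).
Qed.

Lemma left_ideal_colon0 u : left_ideal (colon (0%VS : {vspace 'cV[K]_n}) u).
Proof.
split=> [|b a]; first exact: Ksubspace_colon.
by rewrite /colon !memv0 -mulmxE -mulmxA => /eqP ->; rewrite mulmx0.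
Qed.

End ColonSets.

Theorem proposition5p1 (K : fieldType) (n : nat) (hn : (2 <= n)%N)
    (N : {vspace 'cV[K]_n}) :
  (* (i) *)
  (N = fullv ->
     forall (th : theta) (u : 'cV[K]_n), sigma th N u /\ tau th N u) /\
  (* (ii) *)
  (N = 0%VS ->
     (forall u : 'cV[K]_n, sigma Left N u /\ tau Left N u) /\
     (forall th : theta, th <> Left ->
        forall u : 'cV[K]_n, (sigma th N u <-> u = 0) /\ (tau th N u <-> u = 0))) /\
  (* (iii) *)
  (N <> 0%VS -> N <> fullv ->
     forall (th : theta) (u : 'cV[K]_n),
       (sigma th N u <-> u = 0) /\ (tau th N u <-> u = 0)).
Proof.
split; first by move=> -> th u; apply: sigma_tau_colon_full => a; apply: memvf.
split.
  move=> -> {N}; split=> [u | th th_left u].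
    have sigma_u := left_ideal_colon0 u.
    by split; last exact: (theta_ideal_Mathieu Left).
  apply: sigma_tau_eq0P => u_neq0 /theta_Mathieu_left_or_right[[]//|].
  by apply: colon_not_right_Mathieu; rewrite // eq_sym -dimv_eq0 dim_cV -lt0n ltnW.
move=> /eqP Nn0 /eqP NnT th u; apply: sigma_tau_eq0P => u_neq0.
case/theta_Mathieu_left_or_right => [[_]|].
  exact: colon_not_left_Mathieu.
exact: colon_not_right_Mathieu.
Qed.
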